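(* A TEFX allocation need not exist, for goods or for chores, even when there are $n=2$ agents with identical valuations and only two types of items. That is, there exists an instance with two agents, identical additive valuations, all items goods, items of two types, and no TEFX allocation; and likewise such an instance with all items chores.
   Context: Items $o_1,\dots,o_m$ arrive one per round in this order; agents have additive valuations; in the goods case $v_i(o)\ge 0$, in the chores case $v_i(o)\le 0$ for all agents and items. An allocation $\mathcal{A}=(A_1,\dots,A_n)$ partitions the items; $\mathcal{A}^t$ is its restriction to $o_1,\dots,o_t$. An allocation $(B_1,\dots,B_n)$ is EFX if for all $i,j$ and every good $g\in B_j$, $v_i(B_i)\ge v_i(B_j\setminus\{g\})$ (goods), resp. for every chore $c\in B_i$, $v_i(B_i\setminus\{c\})\ge v_i(B_j)$ (chores). $\mathcal{A}$ is TEFX if $\mathcal{A}^t$ is EFX for every $t$. ''Two types of items'' means the items can be partitioned into two sets $S_1,S_2$ such that every agent values all items within the same set equally. *)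

From mathcomp Require Import all_boot all_order all_algebra.
Set Implicit Arguments. Unset Strict Implicit. Unset Printing Implicit Defensive.
Import Order.TTheory GRing.Theory Num.Theory.
Local Open Scope ring_scope.

(* Items o_1,...,o_m are the ordinals 'I_m, arriving in index order
   (item k arrives in round k+1). *)

Definition bval (n m : nat) (v : 'I_n -> 'I_m -> rat) (i : 'I_n)
  (B : {set 'I_m}) : rat := \sum_(o in B) v i o.

Definition allocation (n m : nat) := 'I_m -> 'I_n.

Definition bundle_upto (n m : nat) (a : allocation n m) (t : nat) (i : 'I_n)
  : {set 'I_m} := [set o : 'I_m | (nat_of_ord o < t)%N && (a o == i)].

Definition EFX_goods (n m : nat) (v : 'I_n -> 'I_m -> rat)
  (B : 'I_n -> {set 'I_m}) : Prop :=
  forall i j : 'I_n, forall g : 'I_m, g \in B j ->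
    bval v i (B j :\ g) <= bval v i (B i).

Definition EFX_chores (n m : nat) (v : 'I_n -> 'I_m -> rat)
  (B : 'I_n -> {set 'I_m}) : Prop :=
  forall i j : 'I_n, forall c : 'I_m, c \in B i ->
    bval v i (B j) <= bval v i (B i :\ c).

Definition TEFX_goods (n m : nat) (v : 'I_n -> 'I_m -> rat)
  (a : allocation n m) : Prop :=
  forall t : nat, (t <= m)%N -> EFX_goods v (bundle_upto a t).

Definition TEFX_chores (n m : nat) (v : 'I_n -> 'I_m -> rat)
  (a : allocation n m) : Prop :=
  forall t : nat, (t <= m)%N -> EFX_chores v (bundle_upto a t).

Definition identical_vals (n m : nat) (v : 'I_n -> 'I_m -> rat) : Prop :=
  forall i j : 'I_n, v i = v j.

Definition goods_instance (n m : nat) (v : 'I_n -> 'I_m -> rat) : Prop :=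
  forall i o, 0 <= v i o.

Definition chores_instance (n m : nat) (v : 'I_n -> 'I_m -> rat) : Prop :=
  forall i o, v i o <= 0.

Definition two_types (n m : nat) (v : 'I_n -> 'I_m -> rat) : Prop :=
  exists S : {set 'I_m},
    forall i : 'I_n, forall o o' : 'I_m,
      (o \in S) = (o' \in S) -> v i o = v i o'.

From mathcomp Require Import all_boot all_order all_algebra.
Set Implicit Arguments. Unset Strict Implicit. Unset Printing Implicit Defensive.
Import Order.TTheory GRing.Theory Num.Theory.
Local Open Scope ring_scope.

(* Two agents share the valuation (1, 1, 2) on goods o1, o2, o3. After two
   rounds EFX forces o1 and o2 into different bundles; whoever then gets o3
   holds a bundle that is still worth 2 after removing its good of value 1,
   which the other agent envies with a bundle of value 1. For chores, with
   identical valuations v, EFX for -v is EFX for v with the roles of the two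
   agents exchanged, so negating the instance gives the chores case. *)

Lemma EFX_chores_oppE (n m : nat) (w : 'I_m -> rat) (B : 'I_n -> {set 'I_m}) :
  EFX_chores (fun _ o => - w o) B <-> EFX_goods (fun _ => w) B.
Proof.
by split=> efx i j g gB; move: (efx j i g gB); rewrite /bval !sumrN lerN2.
Qed.

Lemma TEFX_chores_oppE (n m : nat) (w : 'I_m -> rat) (a : allocation n m) :
  TEFX_chores (fun _ o => - w o) a <-> TEFX_goods (fun _ => w) a.
Proof. by split=> tefx t tm; apply/EFX_chores_oppE; apply: tefx. Qed.

Lemma two_types_opp (n m : nat) (v : 'I_n -> 'I_m -> rat) :
  two_types v -> two_types (fun i o => - v i o).
Proof. by case=> S vS; exists S => i o o' /vS ->. Qed.

Lemma I2_exists_neq (i : 'I_2) : exists j : 'I_2, i != j.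
Proof. by case: i => [[|[|?]] ?]; [exists ord_max | exists ord0 |]. Qed.

Lemma I2_eq_or (i j k : 'I_2) : i != j -> k = i \/ k = j.
Proof.
by case: i j k => [[|[|?]] ?] [[|[|?]] ?] [[|[|?]] ?] //= _;
  (left + right); apply: val_inj.
Qed.

Definition o1 : 'I_3 := ord0.
Definition o2 : 'I_3 := @Ordinal 3 1 isT.
Definition o3 : 'I_3 := ord_max.

Definition item_val (o : 'I_3) : rat := if o == o3 then 2 else 1.

Lemma item_val_ge0 (o : 'I_3) : 0 <= item_val o.
Proof. by rewrite /item_val; case: ifP. Qed.

Lemma two_types_item_val : two_types (fun _ : 'I_2 => item_val).
Proof. by exists [set o3] => i o o'; rewrite !inE /item_val => ->. Qed.

Lemma bval_I3 (n : nat) (v : 'I_n -> 'I_3 -> rat) (i : 'I_n) (B : {set 'I_3}) :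
  bval v i B =
    (if o1 \in B then v i o1 else 0) + (if o2 \in B then v i o2 else 0)
    + (if o3 \in B then v i o3 else 0).
Proof.
rewrite /bval big_mkcond /= !big_ord_recl big_ord0 addr0 addrA.
by congr (_ + (if _ \in B then v i _ else 0) + (if _ \in B then v i _ else 0));
  apply: val_inj.
Qed.

Section NoTEFXGoods.

Variable a : allocation 2 3.
Hypothesis tefx : TEFX_goods (fun _ => item_val) a.

Lemma first_items_split : a o1 != a o2.
Proof.
apply/negP => /eqP same; have [j j_neq] := I2_exists_neq (a o1).
have := @tefx 2%N isT j (a o1) o1.
rewrite !bval_I3 /bundle_upto !inE /= -same eqxx (negbTE j_neq).
by move/(_ isT).
Qed.

Lemma third_item_breaks_EFX : False.
Proof.
have split12 := first_items_split; have split21 := split12.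
rewrite eq_sym in split21.
have [o3_o1 | o3_o2] := I2_eq_or (a o3) split12.
- have := @tefx 3%N isT (a o2) (a o1) o1.
  rewrite !bval_I3 /bundle_upto !inE /= o3_o1 !eqxx.
  by rewrite (negbTE split12) (negbTE split21); move/(_ isT).
- have := @tefx 3%N isT (a o1) (a o2) o2.
  rewrite !bval_I3 /bundle_upto !inE /= o3_o2 !eqxx.
  by rewrite (negbTE split12) (negbTE split21); move/(_ isT).
Qed.

End NoTEFXGoods.

Theorem proposition1 :
  (exists (m : nat) (v : 'I_2 -> 'I_m -> rat),
      identical_vals v /\ goods_instance v /\ two_types v /\
      forall a : allocation 2 m, ~ TEFX_goods v a)
  /\
  (exists (m : nat) (v : 'I_2 -> 'I_m -> rat),
      identical_vals v /\ chores_instance v /\ two_types v /\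
      forall a : allocation 2 m, ~ TEFX_chores v a).
Proof.
split.
- exists 3%N, (fun _ => item_val).
  split=> //; split; first by move=> _; apply: item_val_ge0.
  by split; [exact: two_types_item_val | exact: third_item_breaks_EFX].
- exists 3%N, (fun _ o => - item_val o).
  split=> //; split; first by move=> _ o; rewrite oppr_le0 item_val_ge0.
  split; first exact: two_types_opp two_types_item_val.
  by move=> a /TEFX_chores_oppE; apply: third_item_breaks_EFX.
Qed.
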